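(* Let $A=[a_{ij}]_{i,j=1}^n$ be the transition matrix of a Markov chain on $n$ states (so $a_{ij}\ge 0$ and each row of $A$ sums to $1$). For each positive integer $N$, let $\mu_0^{(N)}\in\mathbb{N}^n$ be a distribution of $N$ particles (nonnegative integer entries summing to $N$), and let $M^{(N)}=[m^{(N)}_{ij}]\in\mathbb{N}^{n\times n}$ be a matrix with nonnegative integer entries such that $M^{(N)}\mathbf{1}=\mu_0^{(N)}$ and $\mathrm{supp}(M^{(N)})\subseteq \mathrm{supp}(\mathrm{diag}(\mu_0^{(N)})A)$. Then there exists a constant $C>0$ such that for all $N$, \[ \left|\log\!\left(P_{\mu_0^{(N)},A}(M^{(N)})\right)+H\!\left(M^{(N)}\,\middle|\,\mathrm{diag}(\mu_0^{(N)})A\right)\right|\le C\log(N). \]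
   Context: $\mathbf{1}$ denotes the $n\times 1$ vector of ones; $\mathrm{supp}(\cdot)$ of a matrix is the set of indices of its nonzero entries. For $\mu_0\in\mathbb{N}^n$ and $M\in\mathbb{N}^{n\times n}$ with $M\mathbf{1}=\mu_0$, the probability of the mass transfer matrix $M$ (where $m_{ij}$ is the number of particles moving from state $i$ to state $j$ when each particle independently moves according to $A$) is \[ P_{\mu_0,A}(M)=\prod_{i=1}^n\left(\binom{(\mu_0)_i}{m_{i1},m_{i2},\dots,m_{in}}\prod_{j=1}^n a_{ij}^{m_{ij}}\right), \] with multinomial coefficients. For nonnegative vectors or matrices $p,q$ of the same dimension, the Kullback–Leibler divergence is $H(p|q)=\sum_i p_i\log(p_i/q_i)$, with the convention $0\log 0=0$. *)

From HB Require Import structures.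
From mathcomp Require Import all_boot all_order all_algebra.
From mathcomp Require Import reals exp.
Set Implicit Arguments. Unset Strict Implicit. Unset Printing Implicit Defensive.
Import Order.TTheory GRing.Theory Num.Theory.
Local Open Scope ring_scope.

Definition multinom (R : realType) (n : nat) (mu : nat) (m : 'I_n -> nat) : R :=
  (mu`!)%:R / \prod_(j < n) ((m j)`!)%:R.

Definition transfer_prob (R : realType) (n : nat) (mu0 : 'I_n -> nat)
    (A : 'M[R]_n) (M : 'M[nat]_n) : R :=
  \prod_(i < n) (multinom R (mu0 i) (fun j => M i j) *
                 \prod_(j < n) (A i j) ^+ (M i j)).

Definition diagA (R : realType) (n : nat) (mu0 : 'I_n -> nat) (A : 'M[R]_n)
  : 'M[R]_n := \matrix_(i, j) ((mu0 i)%:R * A i j).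

Definition KL (R : realType) (n : nat) (p q : 'M[R]_n) : R :=
  \sum_(i < n) \sum_(j < n) (if p i j == 0 then 0 else p i j * ln (p i j / q i j)).

From HB Require Import structures.
From mathcomp Require Import all_boot all_order all_algebra.
From mathcomp Require Import reals exp.
From mathcomp Require Import ring lra.
Import Order.TTheory GRing.Theory Num.Theory.
Local Open Scope ring_scope.

(* With g(k) = ln k! - k ln k one has exactly
     ln P_{mu0,A}(M) + H(M | diag(mu0) A) = \sum_i (g(mu0_i) - \sum_j g(m_ij)),
   since the ln a_ij terms cancel and \sum_j m_ij ln mu0_i = mu0_i ln mu0_i.
   Summing 1/(k+1) <= ln(k+1) - ln k <= 1/k gives -k <= g(k) <= 1 + ln k - k;
   as \sum_j m_ij = mu0_i the linear terms cancel once more, so each row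
   contributes at most (n+1)(1 + ln N).  For N = 1 all the g-values vanish. *)

Section LnFactorial.
Variable R : realType.

Lemma ln_prod (I : Type) (r : seq I) (P : pred I) (F : I -> R) :
  (forall i, P i -> 0 < F i) ->
  ln (\prod_(i <- r | P i) F i) = \sum_(i <- r | P i) ln (F i).
Proof.
move=> F_gt0.
suff [] : 0 < \prod_(i <- r | P i) F i /\
          ln (\prod_(i <- r | P i) F i) = \sum_(i <- r | P i) ln (F i) by [].
apply: (big_ind2 (fun x y => 0 < x /\ ln x = y)) => [|x y u v|i Pi].
- by rewrite ln1.
- by move=> [x_gt0 <-] [u_gt0 <-]; rewrite mulr_gt0 // lnM.
- by rewrite F_gt0.
Qed.

Lemma ln_succ_bounds {k} : (0 < k)%N ->
  k.+1%:R^-1 <= ln (k.+1%:R : R) - ln k%:R <= k%:R^-1.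
Proof.
move=> k_gt0; have k0 : 0 < k%:R :> R by rewrite ltr0n.
have k10 : 0 < k.+1%:R :> R by rewrite ltr0n.
rewrite -ln_div ?posrE //; apply/andP; split.
- have -> : k.+1%:R / k%:R = (1 + - k.+1%:R^-1)^-1 :> R.
    rewrite -[k.+1]addn1 natrD in k10 *; field; lra.
  rewrite lnV ?posrE ?subr_gt0 ?invf_lt1 ?ltr1n // lerNr.
  by rewrite le_ln1Dx // ltrN2 invf_lt1 ?ltr1n.
- have -> : k.+1%:R / k%:R = 1 + k%:R^-1 :> R.
    by rewrite -addn1 natrD mulrDl divff ?gt_eqF // mul1r addrC.
  by rewrite le_ln1Dx // (lt_le_trans (ltrN10 R)) // invr_ge0 ltW.
Qed.

Definition stirling_rem (k : nat) : R := ln k`!%:R - k%:R * ln k%:R.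

Lemma stirling_remS k :
  stirling_rem k.+1 = stirling_rem k - k%:R * (ln k.+1%:R - ln k%:R).
Proof.
rewrite /stirling_rem factS natrM lnM ?posrE ?ltr0n ?fact_gt0 //.
set lnS := ln k.+1%:R; rewrite -addn1 natrD; lra.
Qed.

Lemma stirling_rem_small k : (k <= 1)%N -> stirling_rem k = 0.
Proof. by case: k => [|[]] // _; rewrite /stirling_rem ln1 ?mul0r ?mul1r subrr. Qed.

Lemma stirling_rem_ge k : - k%:R <= stirling_rem k.
Proof.
elim: k => [|k IH]; first by rewrite stirling_rem_small // oppr0.
case: (posnP k) => [->|k_gt0]; first by rewrite stirling_rem_small //; lra.
have /andP[_ ub] := ln_succ_bounds k_gt0.
have k0 : (0 : R) < k%:R by rewrite ltr0n.
have : k%:R * (ln k.+1%:R - ln k%:R) <= 1 :> R.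
  by rewrite -ler_pdivlMl // mulr1.
rewrite stirling_remS; set d := _ - _; rewrite -addn1 natrD; lra.
Qed.

Lemma stirling_rem_le {k} : (0 < k)%N -> stirling_rem k <= 1 + ln k%:R - k%:R.
Proof.
elim: k => // k IH _.
case: (posnP k) => [->|k_gt0]; first by rewrite stirling_rem_small // ln1; lra.
have /andP[lb _] := ln_succ_bounds k_gt0.
have k10 : (0 : R) < k.+1%:R by rewrite ltr0n.
have : 1 <= k.+1%:R * (ln k.+1%:R - ln k%:R) :> R.
  by rewrite -ler_pdivrMl // mulr1.
have := IH k_gt0; rewrite stirling_remS.
set lnS := ln k.+1%:R; rewrite -addn1 natrD; lra.
Qed.

End LnFactorial.

Section TransferProb.
Variables (R : realType) (n : nat).

Lemma multinom_gt0 mu (m : 'I_n -> nat) : 0 < multinom R mu m.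
Proof.
rewrite /multinom divr_gt0 ?ltr0n ?fact_gt0 // prodr_gt0 // => j _.
by rewrite ltr0n fact_gt0.
Qed.

Lemma ln_multinom mu (m : 'I_n -> nat) :
  ln (multinom R mu m) = ln mu`!%:R - \sum_j ln (m j)`!%:R.
Proof.
have fact_gt0 k : (0 : R) < k`!%:R by rewrite ltr0n fact_gt0.
by rewrite /multinom ln_div ?posrE ?prodr_gt0 // ln_prod.
Qed.

Lemma prod_expn_gt0 (a : 'I_n -> R) (m : 'I_n -> nat) :
  (forall j, m j != 0%N -> 0 < a j) -> forall j, 0 < a j ^+ m j.
Proof.
move=> a_gt0 j; have [->|/a_gt0 aj_gt0] := eqVneq (m j) 0%N; first by rewrite expr0.
exact: exprn_gt0.
Qed.

Lemma ln_prod_expn (a : 'I_n -> R) (m : 'I_n -> nat) :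
  (forall j, m j != 0%N -> 0 < a j) ->
  ln (\prod_j a j ^+ m j) = \sum_j (m j)%:R * ln (a j).
Proof.
move=> a_gt0; rewrite ln_prod => [|j _]; last exact: prod_expn_gt0.
apply: eq_bigr => j _; have [->|mj0] := eqVneq (m j) 0%N; first by rewrite ln1 mul0r.
by rewrite lnXn ?a_gt0 // mulr_natl.
Qed.

Lemma ln_multinomial_row (mu : nat) (m : 'I_n -> nat) (a : 'I_n -> R) :
  (\sum_j m j)%N = mu -> (forall j, m j != 0%N -> 0 < a j) ->
  ln (multinom R mu m * \prod_j a j ^+ m j)
  + \sum_j (if (m j)%:R == 0 :> R then 0
            else (m j)%:R * ln ((m j)%:R / (mu%:R * a j)))
  = stirling_rem R mu - \sum_j stirling_rem R (m j).
Proof.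
move=> m_sum a_gt0.
have entry j : (if (m j)%:R == 0 :> R then 0
                else (m j)%:R * ln ((m j)%:R / (mu%:R * a j)))
    = (m j)%:R * ln (m j)%:R - (m j)%:R * ln mu%:R - (m j)%:R * ln (a j).
  rewrite pnatr_eq0; have [->|mj0] := eqVneq (m j) 0%N; first by rewrite !mul0r !subr0.
  have mu_gt0 : (0 : R) < mu%:R.
    by rewrite ltr0n -m_sum (bigD1 j) //= addn_gt0 lt0n mj0.
  have mj_gt0 : (0 : R) < (m j)%:R by rewrite ltr0n lt0n.
  rewrite ln_div ?posrE ?mulr_gt0 ?a_gt0 // lnM ?posrE ?a_gt0 //; ring.
rewrite lnM ?posrE ?multinom_gt0 ?prodr_gt0 //; last by move=> j _; apply: prod_expn_gt0.
rewrite ln_multinom ln_prod_expn // (eq_bigr _ (fun j _ => entry j)) !sumrB.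
rewrite -mulr_suml -natr_sum m_sum /stirling_rem; lra.
Qed.

Lemma ln_transfer_probDKL (A : 'M[R]_n) (mu0 : 'I_n -> nat) (M : 'M[nat]_n) :
  (forall i, (\sum_j M i j)%N = mu0 i) ->
  (forall i j, M i j != 0%N -> 0 < A i j) ->
  ln (transfer_prob mu0 A M)
  + KL (map_mx (fun k : nat => k%:R) M) (diagA mu0 A)
  = \sum_i (stirling_rem R (mu0 i) - \sum_j stirling_rem R (M i j)).
Proof.
move=> M_sum A_gt0; rewrite /transfer_prob ln_prod; last first.
  move=> i _; apply: mulr_gt0; first exact: multinom_gt0.
  by apply: prodr_gt0 => j _; apply: prod_expn_gt0 (A_gt0 i) j.
have row_eq i : ln (multinom R (mu0 i) (M i) * \prod_j A i j ^+ M i j)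
    + \sum_j (let p := map_mx (fun k : nat => k%:R) M in
              if p i j == 0 then 0 else p i j * ln (p i j / diagA mu0 A i j))
    = stirling_rem R (mu0 i) - \sum_j stirling_rem R (M i j).
  rewrite -(ln_multinomial_row _ _ _ (M_sum i) (A_gt0 i)); congr (_ + _).
  by apply: eq_bigr => j _ /=; rewrite !mxE.
by rewrite /KL -(eq_bigr _ (fun i _ => row_eq i)) big_split.
Qed.

End TransferProb.

Section StirlingDefect.
Variables (R : realType) (n : nat).

Lemma one_add_ln_le N : (1 < N)%N ->
  1 + ln N%:R <= (1 + (ln 2)^-1) * ln (N%:R : R).
Proof.
move=> N_gt1; have ln2_gt0 : 0 < ln (2 : R) by rewrite ln_gt0 // ltr1n.
rewrite mulrDl mul1r addrC lerD2l mulrC ler_pdivlMr // mul1r.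
by rewrite ler_ln ?posrE ?ltr0n ?ler_nat // ltnW.
Qed.

Lemma stirling_defect_le {m : 'I_n -> nat} {N} : (0 < N)%N -> (\sum_j m j <= N)%N ->
  `|stirling_rem R (\sum_j m j) - \sum_j stirling_rem R (m j)|
  <= n.+1%:R * (1 + ln N%:R).
Proof.
move=> N_gt0 mN; set mu := (\sum_j m j)%N.
have lnN_ge0 : 0 <= ln (N%:R : R) by rewrite ln_ge0 // ler1n.
have rem_le k : (k <= N)%N -> stirling_rem R k <= 1 + ln N%:R - k%:R.
  move=> kN; case: (posnP k) => [->|k_gt0]; first by rewrite stirling_rem_small //; lra.
  apply: le_trans (stirling_rem_le R k_gt0) _; rewrite lerD2r lerD2l.
  by rewrite ler_ln ?posrE ?ltr0n ?ler_nat // (leq_trans k_gt0).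
have mjN j : (m j <= N)%N by rewrite (leq_trans _ mN) // (bigD1 j) //= leq_addr.
have ub : \sum_j stirling_rem R (m j) <= n%:R * (1 + ln N%:R) - mu%:R.
  apply: le_trans (ler_sum _ (fun j _ => rem_le _ (mjN j))) _.
  by rewrite sumrB sumr_const card_ord mulr_natl natr_sum.
have lb : - mu%:R <= \sum_j stirling_rem R (m j).
  by rewrite natr_sum -sumrN; apply: ler_sum => j _; apply: stirling_rem_ge.
have := stirling_rem_ge R mu; have := rem_le _ mN.
have : 0 <= n%:R * (1 + ln (N%:R : R)) by rewrite mulr_ge0 //; lra.
rewrite ler_norml -addn1 natrD mulrDl mul1r; lra.
Qed.

Lemma stirling_defect_le_ln (m : 'I_n -> nat) N : (0 < N)%N -> (\sum_j m j <= N)%N ->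
  `|stirling_rem R (\sum_j m j) - \sum_j stirling_rem R (m j)|
  <= n.+1%:R * (1 + (ln 2)^-1) * ln (N%:R : R).
Proof.
move=> N_gt0 mN; case: (ltngtP N 1) => [|N_gt1|N1]; first by rewrite ltnNge N_gt0.
- apply: le_trans (stirling_defect_le N_gt0 mN) _.
  by rewrite -mulrA ler_wpM2l ?one_add_ln_le.
- have mj_le1 j : (m j <= 1)%N by rewrite -N1 (leq_trans _ mN) // (bigD1 j) //= leq_addr.
  rewrite N1 ln1 mulr0 stirling_rem_small -?N1 // big1 ?subrr ?normr0 // => j _.
  exact: stirling_rem_small.
Qed.

End StirlingDefect.

Theorem proposition1 (R : realType) (n : nat) (A : 'M[R]_n)
  (mu0 : nat -> 'I_n -> nat) (M : nat -> 'M[nat]_n) :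
  (forall i j, 0 <= A i j) ->
  (forall i, \sum_(j < n) A i j = 1) ->
  (forall N, (0 < N)%N -> (\sum_(i < n) mu0 N i)%N = N) ->
  (forall N, (0 < N)%N -> forall i, (\sum_(j < n) M N i j)%N = mu0 N i) ->
  (forall N, (0 < N)%N -> forall i j,
      M N i j != 0%N -> diagA (mu0 N) A i j != 0) ->
  exists C : R, 0 < C /\
    forall N, (0 < N)%N ->
      `| ln (transfer_prob (mu0 N) A (M N))
         + KL (map_mx (fun k : nat => k%:R) (M N)) (diagA (mu0 N) A) |%R
      <= C * ln (N%:R).
Proof.
move=> A_ge0 _ mu0_sum M_sum M_supp.
have ln2_gt0 : 0 < ln (2 : R) by rewrite ln_gt0 // ltr1n.
exists (n.+1%:R ^+ 2 * (1 + (ln 2)^-1)); split.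
  by rewrite mulr_gt0 ?exprn_gt0 ?ltr0n // addr_gt0 ?invr_gt0.
move=> N N_gt0.
have A_gt0 i j : M N i j != 0%N -> 0 < A i j.
  move=> /(M_supp N N_gt0); rewrite mxE mulf_eq0 negb_or => /andP[_ Aij].
  by rewrite lt_def Aij A_ge0.
have row_le i : (\sum_j M N i j <= N)%N.
  by rewrite M_sum // -[X in (_ <= X)%N](mu0_sum N N_gt0) (bigD1 i) //= leq_addr.
rewrite ln_transfer_probDKL //; last exact: M_sum.
apply: le_trans (ler_norm_sum _ _ _) _.
apply: le_trans (_ : \sum_(i < n) n.+1%:R * (1 + (ln 2)^-1) * ln (N%:R : R) <= _).
  apply: ler_sum => i _; rewrite -{1}(M_sum N N_gt0 i).
  exact: stirling_defect_le_ln.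
have lnN_ge0 : 0 <= ln (N%:R : R) by rewrite ln_ge0 // ler1n.
rewrite sumr_const card_ord -[_ *+ n]mulr_natl expr2 -!mulrA ler_wpM2r ?ler_nat //.
by rewrite mulr_ge0 // mulr_ge0 // addr_ge0 // invr_ge0 ltW.
Qed.
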